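(* Let $n\ge2$ be an integer and let $A_1,\dots,A_{2n}$ be (not necessarily distinct) points in $\mathbb{R}^m$; set $A_{2n+1}=A_1$. Let $G_1$ be the centroid of $A_1,A_3,\dots,A_{2n-1}$ and $G_2$ the centroid of $A_2,A_4,\dots,A_{2n}$. Then $$\sum_{i=1}^{2n}|A_iA_{i+1}|^2=\sum_{\substack{1\le i<j\le 2n\\ 1<j-i<2n-1}}(-1)^{j-i}|A_iA_j|^2$$ holds if and only if $G_1=G_2$.
   Context: $|XY|$ denotes the Euclidean distance in $\mathbb{R}^m$; the centroid of points $B_1,\dots,B_r$ is the point with position vector $\frac1r\sum_k B_k$. *)

From HB Require Import structures.
From mathcomp Require Import all_boot all_order all_algebra.
From mathcomp Require Import all_reals.
Set Implicit Arguments. Unset Strict Implicit. Unset Printing Implicit Defensive.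
Import Order.TTheory GRing.Theory Num.Theory.
Local Open Scope ring_scope.

Definition dist2 (R : realType) (m : nat) (X Y : 'rV[R]_m) : R :=
  \sum_(k < m) (X 0 k - Y 0 k) ^+ 2.

Definition centroid (R : realType) (m r : nat) (B : nat -> 'rV[R]_m) : 'rV[R]_m :=
  (r%:R)^-1 *: \sum_(k < r) B k.

(* With signs s_i = (-1)^i one has s_i s_j = (-1)^(j-i), and the Lagrange-type identity
     sum_(i<j) s_i s_j |A_i A_j|^2 = (sum_i s_i) (sum_i s_i |A_i|^2) - |sum_i s_i A_i|^2
   shows that the alternating sum over all pairs is -|n (G_1 - G_2)|^2, because the signs
   add up to 0.  The right-hand side of the theorem omits exactly the pairs forming the
   edges of the cycle A_1 ... A_2n, all of which have sign -1; so it is the full sum plus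
   the cycle sum, and the identity holds iff |n (G_1 - G_2)|^2 = 0. *)

From HB Require Import structures.
From mathcomp Require Import all_boot all_order all_algebra.
From mathcomp Require Import all_reals.
From mathcomp Require Import zify ring lra.
Set Implicit Arguments.
Unset Strict Implicit.
Unset Printing Implicit Defensive.

Import Order.TTheory GRing.Theory Num.Theory.
Local Open Scope ring_scope.

Lemma signr_subn (R : pzRingType) (i j : nat) : (i <= j)%N ->
  (-1) ^+ (j - i) = (-1) ^+ i * (-1) ^+ j :> R.
Proof. by move=> ij; rewrite -signr_odd oddB // signr_addb !signr_odd -exprD addnC exprD. Qed.

Lemma sum_pairs_weighted_sqrB (R : comPzRingType) (w x : nat -> R) (a b : nat) :
  \sum_(a <= i < b) \sum_(i.+1 <= j < b) w i * w j * (x i - x j) ^+ 2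
  = (\sum_(a <= i < b) w i) * (\sum_(a <= i < b) w i * x i ^+ 2)
    - (\sum_(a <= i < b) w i * x i) ^+ 2.
Proof.
elim: b => [|b IH]; first by rewrite !big_geq // mul0r expr0n subrr.
have [ab | ba] := leqP a b; last by rewrite !big_geq // mul0r expr0n subrr.
rewrite (big_nat_recr b) //= (big_geq (leqnn b.+1)) addr0.
under eq_big_nat => i /andP[_ ib] do rewrite big_nat_recr //=.
rewrite big_split /= IH !big_nat_recr //=.
have -> : \sum_(a <= i < b) w i * w b * (x i - x b) ^+ 2
    = w b * (\sum_(a <= i < b) w i * x i ^+ 2)
      - 2%:R * w b * x b * (\sum_(a <= i < b) w i * x i)
      + w b * x b ^+ 2 * (\sum_(a <= i < b) w i).
  rewrite !mulr_sumr -sumrB -big_split /=.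
  by apply: eq_bigr => i _; ring.
ring.
Qed.

Lemma sum_alternating_even_odd (R : pzRingType) (V : lmodType R) (f : nat -> V) (n : nat) :
  \sum_(1 <= i < (2 * n).+1) (-1) ^+ i *: f i
  = \sum_(t < n) (f (2 * t).+2 - f (2 * t).+1).
Proof.
elim: n => [|n IH]; first by rewrite big_geq // big_ord0.
have -> : (2 * n.+1).+1 = (2 * n).+3 by lia.
have sgn_even : (-1) ^+ (2 * n) = 1 :> R by rewrite exprM sqrrN expr1n expr1n.
rewrite big_nat_recr // big_nat_recr //= IH big_ord_recr /=.
rewrite !exprS sgn_even !mulr1 mulN1r opprK scaleN1r scale1r.
by rewrite addrAC addrA.
Qed.

Lemma sum_pairs_cycle_split (V : nmodType) (F : nat -> nat -> V) (N : nat) : (3 <= N)%N ->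
  \sum_(1 <= i < N.+1) \sum_(i.+1 <= j < N.+1) F i j
  = \sum_(1 <= i < N.+1) \sum_(i.+1 <= j < N.+1 | (1 < j - i < N - 1)%N) F i j
    + (\sum_(1 <= i < N) F i i.+1 + F 1%N N).
Proof.
move=> N3.
under eq_bigr => i _ do rewrite (bigID (fun j => (1 < j - i < N - 1)%N)) /=.
rewrite big_split /=; congr (_ + _).
rewrite big_nat_recr ?(big_geq (leqnn N.+1)) //=; last by lia.
(* For j >= i + 2, the pair (i, j) is a cycle edge only when it is (1, N). *)
rewrite (eq_big_nat _ _ (F2 := fun i => F i i.+1
    + \sum_(i.+2 <= j < N.+1 | (i == 1) && (j == N)) F i j)); last first.
  move=> i /andP[i1 iN]; rewrite big_ltn_cond ?subSnn //=; congr (_ + _).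
  apply: congr_big_nat => // j /andP[ij jN].
  have -> : (1 < j - i)%N by lia.
  rewrite /= -leqNgt; apply/idP/andP => [le | [/eqP-> /eqP->] //].
  by split; apply/eqP; lia.
rewrite addr0 big_split /=; congr (_ + _).
rewrite big_ltn; last by lia.
rewrite [X in _ + X]big_nat_cond [X in _ + X]big1 ?addr0; last first.
  by move=> i /andP[/andP[i2 _] _]; rewrite big_pred0 // => j; rewrite gtn_eqF.
rewrite big_mkcond big_nat_recr //= eqxx big_nat_cond big1 ?add0r // => j /andP[/andP[_ jN] _].
by rewrite ltn_eqF.
Qed.

Section Distance.
Variables (R : realType) (m : nat).
Implicit Types X Y : 'rV[R]_m.

Lemma dist2C X Y : dist2 X Y = dist2 Y X.
Proof. by apply: eq_bigr => k _; rewrite -sqrrN opprB. Qed.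

Lemma dist2_sub0 X Y : dist2 (X - Y) 0 = dist2 X Y.
Proof. by apply: eq_bigr => k _; rewrite !mxE subr0. Qed.

Lemma dist2_eq0 X Y : dist2 X Y = 0 <-> X = Y.
Proof.
split=> [d0 | ->]; last by rewrite /dist2 big1 // => k _; rewrite subrr expr0n.
apply/rowP => k; apply/eqP; rewrite -subr_eq0 -sqrf_eq0; apply/eqP.
exact: (psumr_eq0P (P := predT) (fun k _ => sqr_ge0 _) d0).
Qed.

Lemma sum_pairs_weighted_dist2 (w : nat -> R) (A : nat -> 'rV[R]_m) (a b : nat) :
  \sum_(a <= i < b) \sum_(i.+1 <= j < b) w i * w j * dist2 (A i) (A j)
  = (\sum_(a <= i < b) w i) * (\sum_(a <= i < b) w i * dist2 (A i) 0)
    - dist2 (\sum_(a <= i < b) w i *: A i) 0.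
Proof.
transitivity (\sum_(k < m) ((\sum_(a <= i < b) w i)
    * (\sum_(a <= i < b) w i * A i 0 k ^+ 2) - (\sum_(a <= i < b) w i * A i 0 k) ^+ 2)).
  under eq_bigr do under eq_bigr do rewrite /dist2 mulr_sumr.
  under eq_bigr do rewrite exchange_big.
  rewrite exchange_big; apply: eq_bigr => k _.
  exact: sum_pairs_weighted_sqrB.
rewrite sumrB -mulr_sumr /dist2 exchange_big; congr (_ * _ - _).
  by apply: eq_bigr => i _; rewrite mulr_sumr; apply: eq_bigr => k _; rewrite mxE subr0.
apply: eq_bigr => k _; rewrite !mxE subr0 summxE.
by congr (_ ^+ 2); apply: eq_bigr => i _; rewrite mxE.
Qed.

Lemma sum_pairs_alternating_dist2 (A : nat -> 'rV[R]_m) (n : nat) :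
  \sum_(1 <= i < (2 * n).+1) \sum_(i.+1 <= j < (2 * n).+1) (-1) ^+ (j - i) * dist2 (A i) (A j)
  = - dist2 (\sum_(t < n) A (2 * t).+1) (\sum_(t < n) A (2 * t).+2).
Proof.
have sum_sign0 : \sum_(1 <= i < (2 * n).+1) (-1) ^+ i = 0 :> R.
  transitivity (\sum_(1 <= i < (2 * n).+1) (-1) ^+ i *: (1 : R^o)).
    by apply: eq_bigr => i _; symmetry; exact: mulr1.
  by rewrite sum_alternating_even_odd big1 // => t _; rewrite subrr.
under eq_big_nat => i _ do under eq_big_nat => j /andP[ij _] do
  rewrite signr_subn 1?ltnW //.
rewrite sum_pairs_weighted_dist2 sum_sign0 mul0r add0r.
by rewrite sum_alternating_even_odd sumrB dist2_sub0 dist2C.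
Qed.

Lemma centroid_eq (r : nat) (B C : nat -> 'rV[R]_m) : (0 < r)%N ->
  centroid r B = centroid r C <-> \sum_(k < r) B k = \sum_(k < r) C k.
Proof.
move=> r0; rewrite /centroid; split=> [|-> //]; apply: scalerI.
by rewrite invr_eq0 pnatr_eq0 -lt0n.
Qed.

End Distance.

Theorem corollary3p2 (R : realType) (m n : nat) (hn : (2 <= n)%N)
    (A : nat -> 'rV[R]_m) :
  (\sum_(1 <= i < 2 * n) dist2 (A i) (A i.+1) + dist2 (A (2 * n)%N) (A 1%N)
   = \sum_(1 <= i < (2 * n).+1)
       \sum_(i.+1 <= j < (2 * n).+1 | (1 < j - i)%N && (j - i < 2 * n - 1)%N)
         ((-1) ^+ (j - i) * dist2 (A i) (A j)))
  <->
  centroid n (fun k => A (2 * k).+1) = centroid n (fun k => A (2 * k).+2).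
Proof.
have sign_last : (-1) ^+ (2 * n - 1) = -1 :> R.
  by rewrite -signr_odd oddB ?mul2n ?odd_double // double_gt0; lia.
have n3 : (3 <= 2 * n)%N by lia.
have := sum_pairs_cycle_split (fun i j => (-1) ^+ (j - i) * dist2 (A i) (A j)) n3.
rewrite sum_pairs_alternating_dist2 sign_last mulN1r (dist2C (A 1%N)).
rewrite (eq_big_nat _ _ (m := 1%N) (n := (2 * n)%N)
    (F2 := fun i => - dist2 (A i) (A i.+1))); last first.
  by move=> i _; rewrite subSnn expr1 mulN1r.
rewrite sumrN => cycle_split.
rewrite centroid_eq; last by lia.
rewrite -dist2_eq0; split=> eq; lra.
Qed.
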